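(* Let $(\mathcal A,\varphi,\mathcal F,\Phi)$ be a ncps of type B$'$ with associated algebra $\mathcal B$ and functional $\varphi$ on $\mathcal B$. For $i\in I$ let $\mathcal A_i$ be a subalgebra of $\mathcal A$ containing $1_{\mathcal A}$, $\mathcal F_i$ a subalgebra of $\mathcal F$, and $\mathcal B_i=\mathcal A_i\langle\mathcal F_i\rangle$ the subalgebra of $\mathcal B$ generated by $\mathcal A_i\oplus\mathcal F_i$. Let $P\in\mathcal F$ with $\Phi(P)\ne0$ and $\mathcal F_P:=\{cP^n: n\in\mathbb N,c\in\mathbb C\}$. Assume that $((\mathcal A_i)_{i\in I},(\mathcal F_i)_{i\in I\sqcup\{P\}})$ is weakly B$'$-free. Then $(\mathcal B_i)_{i\in I}$ are conditionally free with respect to $(\varphi,\varphi_P)$ if and only if $(\mathcal F_i)_{i\in I}$ are Boolean independent with respect to $\varphi_P$.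
   Context: Ncps of type B$'$ $(\mathcal A,\varphi,\mathcal F,\Phi)$: $\mathcal A$ unital complex algebra, $\varphi(1_{\mathcal A})=1$, $\mathcal F$ an algebra which is an $\mathcal A$-bimodule compatible with its multiplication, $\Phi:\mathcal F\to\mathbb C$ linear. $\mathcal B=\mathcal A\oplus\mathcal F$ with product $(a_1,f_1)(a_2,f_2)=(a_1a_2,a_1f_2+f_1a_2+f_1f_2)$, unit $1_{\mathcal A}$; $\varphi(a+f):=\varphi(a)$, $\varphi'(a+f):=\Phi(f)$. For $P\in\mathcal F$ with $\Phi(P)\neq0$, $\varphi_P(b):=\Phi(Pb)/\Phi(P)$ for $b\in\mathcal B$ (note $Pb\in\mathcal F$). Weak B$'$-freeness of $((\mathcal A_i)_{i\in I},(\mathcal F_j)_{j\in J})$: the $\mathcal A_i$ are free w.r.t. $\varphi$ ($\varphi(c_1\cdots c_n)=0$ for alternating indices and centered $c_l\in\mathcal A_{i_l}$), and with $\mathcal A_0$ the algebra generated by all $\mathcal A_i$ and $\mathcal F_0$ the algebra generated by all $\mathcal F_j$, $\Phi(c_0g_1c_1\cdots c_{n-1}g_nc_n)=\varphi(c_0c_n)\prod_{l=1}^{n-1}\varphi(c_l)\Phi(g_1\cdots g_n)$ for all $n\ge1$, $c_l\in\mathcal A_0$, $g_l\in\mathcal F_0$. Subalgebras $(\mathcal C_i)$ (not necessarily unital) are Boolean independent w.r.t. a functional $\psi$ if $\psi(c_1\cdots c_n)=\psi(c_1)\cdots\psi(c_n)$ whenever $i_1\ne i_2\ne\cdots\ne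 i_n$, $c_l\in\mathcal C_{i_l}$. Unital subalgebras $(\mathcal B_i)$ are conditionally free w.r.t. $(\varphi,\psi)$ if they are free w.r.t. $\varphi$ and $\psi(b_1\cdots b_n)=\psi(b_1)\cdots\psi(b_n)$ whenever $n\ge1$, $i_1\ne\cdots\ne i_n$, $b_l\in\mathcal B_{i_l}$, $\varphi(b_l)=0$. *)

(* Complex scalars are modelled as R[i] = complex R for
   R : realType (a complete archimedean ordered field, i.e. a copy of the
   reals), so R[i] is a copy of the complex numbers. *)
From HB Require Import structures.
From mathcomp Require Import all_boot all_order all_algebra.
From mathcomp Require Import reals.
From mathcomp Require Export complex.
Set Implicit Arguments. Unset Strict Implicit. Unset Printing Implicit Defensive.
Import Order.TTheory GRing.Theory Num.Theory.
Local Open Scope ring_scope.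

Section NCPS.
Variable (K : fieldType) (B : algType K).

Definition lin_functional (f : B -> K) : Prop :=
  forall (a : K) (x y : B), f (a *: x + y) = a * f x + f y.

Definition subalg (S : B -> Prop) : Prop :=
  [/\ S 0, (forall x y, S x -> S y -> S (x + y)),
      (forall (c : K) x, S x -> S (c *: x)) &
      (forall x y, S x -> S y -> S (x * y))].

Inductive gen_alg (S : B -> Prop) : B -> Prop :=
  | gen_base x : S x -> gen_alg S x
  | gen_zero : gen_alg S 0
  | gen_add x y : gen_alg S x -> gen_alg S y -> gen_alg S (x + y)
  | gen_scale (c : K) x : gen_alg S x -> gen_alg S (c *: x)
  | gen_mul x y : gen_alg S x -> gen_alg S y -> gen_alg S (x * y).

Definition gen_ualg (S : B -> Prop) : B -> Prop :=
  gen_alg (fun x => x = 1 \/ S x).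

(* An ncps of type B' (A, phi, F, Phi), presented inside its associated
   algebra B = A (+) F: A is a unital subalgebra, F a subalgebra which is
   an A-bimodule (i.e. A F, F A are contained in F), B is the direct sum
   A (+) F (this makes the product of B exactly
   (a1,f1)(a2,f2) = (a1a2, a1f2 + f1a2 + f1f2)).
   phi : B -> K is the extension phi(a + f) = phi(a) with phi(1) = 1, and
   Phi is a linear functional (only its values on F are ever used). *)
Definition is_ncpsB' (A F : B -> Prop) (phi Phi : B -> K) : Prop :=
  [/\ subalg A /\ A 1,
      subalg F /\
      (forall a f, A a -> F f -> F (a * f) /\ F (f * a)),
      (forall b, exists a f, [/\ A a, F f & b = a + f]) /\
        (forall x, A x -> F x -> x = 0),
      [/\ lin_functional phi, phi 1 = 1 & forall f, F f -> phi f = 0] &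
      lin_functional Phi].

Section Indep.
Variable (I : Type).

Definition alternating (n : nat) (i : nat -> I) : Prop :=
  forall k, (k.+1 < n)%N -> i k <> i k.+1.

Definition free (Ai : I -> B -> Prop) (phi : B -> K) : Prop :=
  forall (n : nat) (i : nat -> I) (c : nat -> B),
    (0 < n)%N -> alternating n i ->
    (forall k, (k < n)%N -> Ai (i k) (c k) /\ phi (c k) = 0) ->
    phi (\prod_(0 <= k < n) c k) = 0.

Definition boolean_indep (Ci : I -> B -> Prop) (psi : B -> K) : Prop :=
  forall (n : nat) (i : nat -> I) (c : nat -> B),
    (0 < n)%N -> alternating n i ->
    (forall k, (k < n)%N -> Ci (i k) (c k)) ->
    psi (\prod_(0 <= k < n) c k) = \prod_(0 <= k < n) psi (c k).

Definition cond_free (Bi : I -> B -> Prop) (phi psi : B -> K) : Prop :=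
  free Bi phi /\
  forall (n : nat) (i : nat -> I) (b : nat -> B),
    (0 < n)%N -> alternating n i ->
    (forall k, (k < n)%N -> Bi (i k) (b k) /\ phi (b k) = 0) ->
    psi (\prod_(0 <= k < n) b k) = \prod_(0 <= k < n) psi (b k).
End Indep.

Definition weakly_B'_free (I J : Type) (Ai : I -> B -> Prop)
    (Fj : J -> B -> Prop) (phi Phi : B -> K) : Prop :=
  let A0 := gen_ualg (fun x => exists i, Ai i x) in
  let F0 := gen_alg (fun x => exists j, Fj j x) in
  free Ai phi /\
  forall (n : nat) (c g : nat -> B),
    (0 < n)%N ->
    (forall l, (l <= n)%N -> A0 (c l)) ->
    (forall l, (0 < l <= n)%N -> F0 (g l)) ->
    Phi (c 0%N * \prod_(1 <= l < n.+1) (g l * c l)) =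
      phi (c 0%N * c n) * (\prod_(1 <= l < n) phi (c l)) *
      Phi (\prod_(1 <= l < n.+1) g l).

Definition gen_AF (Ai Fi : B -> Prop) : B -> Prop :=
  gen_alg (fun x => exists a f, [/\ Ai a, Fi f & x = a + f]).

Definition phiP (Phi : B -> K) (P : B) (b : B) : K := Phi (P * b) / Phi P.

Definition F_P (P : B) : B -> Prop :=
  fun x => exists (n : nat) (c : K), (0 < n)%N /\ x = c *: P ^+ n.

End NCPS.

(* Centered elements of A_i<F_i> are linear combinations of letters: centered
   elements of A_i, and words u g_1 c_1 ... g_n v with c_k in A_i, g_k in F_i and
   u, v each 1 or centered in A_i.  Both identities to prove are multilinear, so
   it suffices to check them on alternating products of letters.  Weak
   B'-freeness, applied with P in front, gives
     psi (c_0 g_1 c_1 ... g_n c_n) = phi c_0 * ... * phi c_n * psi (g_1 ... g_n)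
   for c_k in the algebra generated by the A_i and g_k in the one generated by
   the F_j.  In an alternating product of letters, a maximal run of centered
   letters together with the adjacent ends of words is an alternating product
   of centered elements, on which phi vanishes by freeness of the A_i.  Hence
   both sides vanish as soon as a centered letter occurs, and otherwise Boolean
   independence of the F_i finishes the computation.  Conversely F_i lies in
   A_i<F_i> and phi vanishes on F. *)

From Pilot Require Import Defs.
From HB Require Import structures.
From mathcomp Require Import all_boot all_order all_algebra.
From mathcomp Require Import reals complex.
From mathcomp Require Import ring.
From mathcomp Require boolp.
Set Implicit Arguments. Unset Strict Implicit. Unset Printing Implicit Defensive.
Import Order.TTheory GRing.Theory Num.Theory.
Local Open Scope ring_scope.

Lemma big_nat_recr_ext (R : Type) (idx : R) (op : Monoid.law idx) (G F : nat -> R) m n :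
  (m <= n)%N -> (forall k, (k < n)%N -> F k = G k) ->
  \big[op/idx]_(m <= k < n.+1) F k = op (\big[op/idx]_(m <= k < n) G k) (F n).
Proof.
move=> mn FG; rewrite big_nat_recr //; congr (op _ _).
by apply: eq_big_nat => k /andP[_ /FG].
Qed.
Arguments big_nat_recr_ext {R idx op} G {F m n}.

Lemma big_nat_eta (R T : Type) (idx : R) (op : Monoid.law idx) (G : T -> R)
    (b : nat -> T) m n x : (m < n)%N ->
  \big[op/idx]_(0 <= k < n) G ([eta b with m |-> x] k) =
  op (op (\big[op/idx]_(0 <= k < m) G (b k)) (G x)) (\big[op/idx]_(m.+1 <= k < n) G (b k)).
Proof.
move=> mn; rewrite (big_cat_nat (leq0n m) (ltnW mn)) (big_ltn mn) /= eqxx Monoid.mulmA.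
congr (op (op _ _) _); apply: eq_big_nat => k /andP[lo hi].
  by rewrite ltn_eqF.
by rewrite gtn_eqF.
Qed.

Section LinearFunctional.
Variables (K : fieldType) (B : algType K) (f : B -> K).
Hypothesis f_lin : lin_functional f.

Lemma lin_functionalD x y : f (x + y) = f x + f y.
Proof. by rewrite -[x in LHS]scale1r f_lin mul1r. Qed.

Lemma lin_functional0 : f 0 = 0.
Proof. by apply: (addrI (f 0)); rewrite -lin_functionalD !addr0. Qed.

Lemma lin_functionalZ c x : f (c *: x) = c * f x.
Proof. by rewrite -[c *: x]addr0 f_lin lin_functional0 addr0. Qed.

End LinearFunctional.

Section Span.
Variables (K : fieldType) (B : algType K).

Inductive span (S : B -> Prop) : B -> Prop :=
  | span_base x : S x -> span S x
  | span0 : span S 0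
  | spanD x y : span S x -> span S y -> span S (x + y)
  | spanZ (c : K) x : span S x -> span S (c *: x).

Lemma span_sub (S S' : B -> Prop) x : (forall y, S y -> S' y) -> span S x -> span S' x.
Proof.
move=> SS'; elim=> [y /SS' | | ? ? _ ? _ ? | ? ? _ ?].
- exact: span_base.
- exact: span0.
- exact: spanD.
- exact: spanZ.
Qed.

Lemma span_kernel (f : B -> K) (S : B -> Prop) x : lin_functional f ->
  (forall y, S y -> f y = 0) -> span S x -> f x = 0.
Proof.
move=> f_lin Sf0; elim=> [y /Sf0 // | | y z _ fy _ fz | c y _ fy].
- exact: lin_functional0 f_lin.
- by rewrite (lin_functionalD f_lin) fy fz addr0.
- by rewrite (lin_functionalZ f_lin) fy mulr0.
Qed.

Lemma span_mul (S : B -> Prop) x y :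
  (forall x y, S x -> S y -> span S (x * y)) -> span S x -> span S y -> span S (x * y).
Proof.
move=> SM Sx; elim: Sx y => [x' Sx' | | x1 x2 _ IH1 _ IH2 | c x' _ IH] y Sy.
- elim: Sy => [y' Sy' | | y1 y2 _ IH1 _ IH2 | c y' _ IH].
  + exact: SM.
  + by rewrite mulr0; apply: span0.
  + by rewrite mulrDr; apply: spanD.
  + by rewrite -scalerAr; apply: spanZ.
- by rewrite mul0r; apply: span0.
- by rewrite mulrDl; apply: spanD; [apply: IH1 | apply: IH2].
- by rewrite -scalerAl; apply: spanZ; apply: IH.
Qed.

Definition multilinear (n : nat) (Q : (nat -> B) -> K) : Prop :=
  forall m b (c : K) x y, (m < n)%N ->
    Q [eta b with m |-> c *: x + y] = c * Q [eta b with m |-> x] + Q [eta b with m |-> y].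

Lemma multilinear_span n Q (S : nat -> B -> Prop) : multilinear n Q ->
  (forall b, (forall k, (k < n)%N -> S k (b k)) -> Q b = 0) ->
  forall b, (forall k, (k < n)%N -> span (S k) (b k)) -> Q b = 0.
Proof.
move=> Qlin QS.
have Q0 b m : (m < n)%N -> Q [eta b with m |-> 0] = 0.
  move=> mn; have := Qlin m b 1 0 0 mn; rewrite scale1r addr0 mul1r => Q00.
  by apply: (addrI (Q [eta b with m |-> 0])); rewrite addr0 -Q00.
suff partial m b : (forall k, (k < m)%N -> (k < n)%N -> span (S k) (b k)) ->
    (forall k, (m <= k < n)%N -> S k (b k)) -> Q b = 0.
  move=> b Sb; apply: (partial n) => [k _ /Sb // | k /andP[nk kn]].
  by move: (leq_trans kn nk); rewrite ltnn.
elim: m b => [|m IH] b span_lo S_hi; first by apply: QS => k kn; apply: S_hi.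
have [mn | nm] := ltnP m n; last by apply: IH => [k km | k /andP[mk kn]];
  [apply: span_lo; apply: ltnW | move: (leq_trans nm mk); rewrite leqNgt kn].
have -> : b = [eta b with m |-> b m].
  by apply: boolp.funext => k /=; case: eqP => // ->.
elim: (span_lo m (ltnSn m) mn) => [x Sx | | x y _ IHx _ IHy | c x _ IHx].
- apply: IH => [k km kn | k /andP[mk kn]] /=.
    by rewrite ltn_eqF //; apply: span_lo => //; apply: ltnW.
  by case: eqP => [-> // | /eqP km]; apply: S_hi; rewrite ltn_neqAle eq_sym km mk.
- exact: Q0.
- by rewrite -[x]scale1r Qlin // IHx IHy mulr0 addr0.
- by rewrite -[c *: x]addr0 Qlin // IHx Q0 // mulr0 addr0.
Qed.

Lemma multilinear_prod n (f : B -> K) : lin_functional f ->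
  multilinear n (fun b => f (\prod_(0 <= k < n) b k)).
Proof.
move=> f_lin m b c x y mn; rewrite !(big_nat_eta _ id) //=.
by rewrite mulrDr mulrDl -scalerAr -scalerAl f_lin.
Qed.

Lemma multilinear_prod_defect n (f : B -> K) : lin_functional f ->
  multilinear n (fun b => f (\prod_(0 <= k < n) b k) - \prod_(0 <= k < n) f (b k)).
Proof.
move=> f_lin m b c x y mn; rewrite !(big_nat_eta _ id) // !(big_nat_eta _ f) //=.
rewrite mulrDr mulrDl -scalerAr -scalerAl f_lin !(lin_functionalD f_lin).
by rewrite !(lin_functionalZ f_lin); ring.
Qed.

End Span.

Section Chain.
Variables (K : fieldType) (B : algType K) (phi : B -> K).

(* [chain CA GF l y x]: x = g_1 c_1 g_2 ... c_(n-1) g_n with the c_k in CA and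
   the g_k in GF, l = phi c_1 * ... * phi c_(n-1) and y = g_1 * ... * g_n. *)
Inductive chain (CA GF : B -> Prop) : K -> B -> B -> Prop :=
  | chain1 g : GF g -> chain CA GF 1 g g
  | chain_snoc l y x c g : chain CA GF l y x -> CA c -> GF g ->
      chain CA GF (l * phi c) (y * g) (x * c * g).

Lemma chain_sub (CA GF CA' GF' : B -> Prop) l y x :
  (forall c, CA c -> CA' c) -> (forall g, GF g -> GF' g) ->
  chain CA GF l y x -> chain CA' GF' l y x.
Proof.
move=> CC' GG'; elim=> [g /GG' | l' y' x' c g _ IH /CC' Cc /GG' Gg].
  exact: chain1.
exact: chain_snoc.
Qed.

Lemma chain_cat (CA GF : B -> Prop) l y x l' y' x' c :
  chain CA GF l y x -> CA c -> chain CA GF l' y' x' ->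
  chain CA GF (l * phi c * l') (y * y') (x * c * x').
Proof.
move=> ch Cc; elim=> [g Gg | l'' y'' x'' c' g _ IH Cc' Gg].
  by rewrite mulr1; apply: chain_snoc.
by rewrite !mulrA; apply: chain_snoc.
Qed.

Lemma chain_prod_in (CA GF : B -> Prop) l y x :
  (forall g g', GF g -> GF g' -> GF (g * g')) -> chain CA GF l y x -> GF y.
Proof. by move=> GFM; elim=> // l' y' x' c g _ IH _; apply: GFM. Qed.

Lemma chain_in_left_ideal (CA GF J : B -> Prop) l y x :
  (forall g, GF g -> J g) -> (forall a g, J g -> J (a * g)) ->
  chain CA GF l y x -> J x.
Proof. by move=> GFJ JM; elim=> [g /GFJ // | l' y' x' c g _ _ _ /GFJ /JM]. Qed.

Lemma chain_seq (CA GF : B -> Prop) l y x c0 cn :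
  chain CA GF l y x -> CA c0 -> CA cn ->
  exists n (c g : nat -> B), [/\ (0 < n)%N, c 0%N = c0, c n = cn,
    forall k, (k <= n)%N -> CA (c k) & forall k, (0 < k <= n)%N -> GF (g k)] /\
    [/\ x * cn = \prod_(1 <= k < n.+1) (g k * c k),
        l = \prod_(1 <= k < n) phi (c k) & y = \prod_(1 <= k < n.+1) g k].
Proof.
move=> ch C0; elim: ch cn => [g Gg | l' y' x' c g _ IH Cc Gg] cn Cn.
  exists 1%N, [eta (fun=> c0) with 1%N |-> cn], (fun=> g).
  split; split=> //=; first by case=> [|[]].
  - by rewrite big_nat1.
  - by rewrite big_geq.
  - by rewrite big_nat1.
have [n [cs [gs [[n0 cs0 csn Ccs Ggs] [xcE -> ->]]]]] := IH c Cc.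
exists n.+1, [eta cs with n.+1 |-> cn], [eta gs with n.+1 |-> g]; split; split=> //=.
- by rewrite eqxx.
- move=> k kn; case: eqP => [// | /eqP kn1]; apply: Ccs.
  by rewrite -ltnS ltn_neqAle kn1 kn.
- move=> k /andP[k0 kn]; case: eqP => // /eqP kn1; apply: Ggs.
  by rewrite k0 -ltnS ltn_neqAle kn1 kn.
- rewrite (big_nat_recr_ext (fun k => gs k * cs k)) //=; last first.
    by move=> k kn; rewrite !ltn_eqF.
  by rewrite eqxx -xcE !mulrA.
- rewrite (big_nat_recr_ext (fun k => phi (cs k))) //=; last first.
    by move=> k kn; rewrite ltn_eqF // ltnW.
  by rewrite ltn_eqF // csn.
- rewrite [RHS](big_nat_recr_ext gs) //= ?eqxx // => k kn.
  by rewrite ltn_eqF.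
Qed.

End Chain.

Section ConditionalFreeness.
Variables (K : fieldType) (B : algType K) (A F : B -> Prop) (phi Phi : B -> K).
Variables (I : Type) (Ai Fi : I -> B -> Prop) (P : B).
Hypothesis ncps : is_ncpsB' A F phi Phi.
Hypothesis Ai_subalg : forall i, subalg (Ai i).
Hypothesis Ai1 : forall i, Ai i 1.
Hypothesis Fi_subalg : forall i, subalg (Fi i).
Hypothesis Fi_F : forall i x, Fi i x -> F x.
Hypothesis FP : F P.
Hypothesis PhiP_neq0 : Phi P != 0.
Hypothesis weakly_free :
  weakly_B'_free Ai (fun j : option I => if j is Some i then Fi i else F_P P) phi Phi.

Local Notation psi := (phiP Phi P).
Local Notation A0 := (gen_ualg (fun x => exists i, Ai i x)).
Local Notation F0 :=
  (gen_alg (fun x => exists j : option I, (if j is Some i then Fi i else F_P P) x)).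

Lemma phi_lin : lin_functional phi. Proof. by case: ncps => _ _ _ []. Qed.
Lemma phi1 : phi 1 = 1. Proof. by case: ncps => _ _ _ []. Qed.
Lemma phi_F f : F f -> phi f = 0. Proof. by case: ncps => _ _ _ [_ _ /(_ f)]. Qed.

Lemma psi_lin : lin_functional psi.
Proof.
case: ncps => _ _ _ _ Phi_lin c x y.
by rewrite /phiP mulrDr -scalerAr Phi_lin mulrDl mulrA.
Qed.

Lemma F_ideal x f : F f -> F (x * f) /\ F (f * x).
Proof.
case: ncps => _ [[_ FD _ FM] F_bimod] [A_F_sum _] _ _ Ff.
have [a [g [Aa Fg ->]]] := A_F_sum x; have [Faf Ffa] := F_bimod a f Aa Ff.
by rewrite mulrDl mulrDr; split; apply: FD => //; apply: FM.
Qed.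

Lemma Ai_A0 i a : Ai i a -> A0 a. Proof. by move=> Aa; apply: gen_base; right; exists i. Qed.
Lemma A0_1 : A0 1. Proof. by apply: gen_base; left. Qed.
Lemma Fi_F0 i f : Fi i f -> F0 f. Proof. by move=> Ff; apply: gen_base; exists (Some i). Qed.
Lemma P_F0 : F0 P.
Proof. by apply: gen_base; exists None, 1%N, 1; rewrite expr1 scale1r. Qed.

Lemma Ai_free : Defs.free Ai phi. Proof. exact: (proj1 weakly_free). Qed.

Lemma Phi_chain l y x c0 cn : chain phi A0 F0 l y x -> A0 c0 -> A0 cn ->
  Phi (c0 * x * cn) = phi (c0 * cn) * l * Phi y.
Proof.
move=> ch A0c0 A0cn.
have [n [c [g [[n0 <- <- A0c F0g] [xE -> ->]]]]] := chain_seq ch A0c0 A0cn.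
by rewrite -mulrA xE; apply: (proj2 weakly_free).
Qed.

Lemma psi_A0 c : A0 c -> psi c = phi c.
Proof.
move=> A0c; rewrite /phiP -[P * c]mul1r mulrA.
by rewrite (Phi_chain (chain1 _ _ P_F0) A0_1 A0c) mul1r mulr1 mulfK.
Qed.

Lemma psi_chain l y x c0 cn : chain phi A0 F0 l y x -> A0 c0 -> A0 cn ->
  psi (c0 * x * cn) = phi c0 * l * phi cn * psi y.
Proof.
move=> ch A0c0 A0cn; have chP := chain_cat (chain1 phi A0 P_F0) A0c0 ch.
rewrite /phiP !mulrA -[P * c0 * x]mul1r (Phi_chain chP A0_1 A0cn) mul1r.
by ring.
Qed.

Definition centered i a := Ai i a /\ phi a = 0.
Definition unit_or_centered i a := a = 1 \/ centered i a.

Lemma centered_decomp i a : Ai i a -> exists2 a', centered i a' & a = a' + phi a *: 1.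
Proof.
have [_ AD AZ _] := Ai_subalg i; move=> Aa; exists (a + (- phi a) *: 1).
  split; first by apply: AD => //; apply: AZ; apply: Ai1.
  by rewrite (lin_functionalD phi_lin) (lin_functionalZ phi_lin) phi1 mulr1 addrN.
by rewrite scaleNr addrNK.
Qed.

Definition alt_centered i x := exists n (ix : nat -> I) (cs : nat -> B),
  [/\ (0 < n)%N, alternating n ix, forall k, (k < n)%N -> centered (ix k) (cs k),
      ix n.-1 = i & x = \prod_(0 <= k < n) cs k].

Lemma phi_alt_centered i x : alt_centered i x -> phi x = 0.
Proof. by case=> n [ix [cs [n0 alt cen _ ->]]]; apply: (Ai_free n0 alt cen). Qed.

Lemma alt_centered_A0 i x : alt_centered i x -> A0 x.
Proof.
case=> n [ix [cs [_ _ cen _ ->]]]; rewrite big_nat_cond.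
apply: (big_ind A0 A0_1 (@gen_mul _ _ _)) => k /andP[/andP[_ kn] _].
by have [/Ai_A0] := cen k kn.
Qed.

Lemma alt_centered1 i a : centered i a -> alt_centered i a.
Proof. by exists 1%N, (fun=> i), (fun=> a); split; rewrite ?big_nat1. Qed.

Lemma alt_centered_snoc i j x a :
  alt_centered i x -> centered j a -> i <> j -> alt_centered j (x * a).
Proof.
case=> n [ix [cs [n0 alt cen isn ->]]] cen_a ij.
exists n.+1, [eta ix with n |-> j], [eta cs with n |-> a]; split=> //=.
- move=> k kn /=; rewrite ltn_eqF //; case: eqP => [k1n | /eqP k1n].
    by move: isn; rewrite -k1n /= => ->.
  by apply: alt; rewrite ltn_neqAle k1n -ltnS.
- by move=> k kn; case: eqP => // /eqP kn'; apply: cen; rewrite ltn_neqAle kn' -ltnS.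
- by rewrite eqxx.
- by rewrite (big_nat_recr_ext cs) //= ?eqxx // => k kn; rewrite ltn_eqF.
Qed.

Definition unit_or_alt_centered i t := t = 1 \/ alt_centered i t.

Lemma unit_or_alt_centered_A0 i t : unit_or_alt_centered i t -> A0 t.
Proof. by case=> [-> | /alt_centered_A0]; [apply: A0_1 |]. Qed.

Lemma unit_or_alt_centered_snoc i j t a :
  unit_or_alt_centered i t -> centered j a -> i <> j -> alt_centered j (t * a).
Proof.
case=> [-> | t_alt] a_cen ij; first by rewrite mul1r; apply: alt_centered1.
exact: alt_centered_snoc t_alt a_cen ij.
Qed.

Lemma phi_mul_unit_or_centered i j t a :
  unit_or_alt_centered i t -> unit_or_centered j a -> i <> j -> phi (t * a) = phi t * phi a.
Proof.
move=> t_uac [-> | a_cen] ij; first by rewrite mulr1 phi1 mulr1.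
have [_ ->] := a_cen; rewrite mulr0.
exact: phi_alt_centered (unit_or_alt_centered_snoc t_uac a_cen ij).
Qed.

Definition word j x := exists a0 am chi l y,
  [/\ unit_or_centered j a0, unit_or_centered j am, chain phi (Ai j) (Fi j) l y chi &
      x = a0 * chi * am].

Definition letter j x := centered j x \/ word j x.

Lemma unit_or_centered_A0 j a : unit_or_centered j a -> A0 a.
Proof. by case=> [-> | [/Ai_A0]]; [apply: A0_1 |]. Qed.

Lemma unit_or_centered_alt j a : unit_or_centered j a -> unit_or_alt_centered j a.
Proof. by case=> [-> | /alt_centered1]; [left | right]. Qed.

Lemma chain_A0F0 j l y x : chain phi (Ai j) (Fi j) l y x -> chain phi A0 F0 l y x.
Proof. by apply: chain_sub => [c /Ai_A0 | g /Fi_F0]. Qed.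

Lemma F0_F f : F0 f -> F f.
Proof.
case: ncps => _ [[F_0 FD FZ FM] _] _ _ _.
elim=> [x [[i /Fi_F // | [k [c [k0 ->]]]]] | | x y _ Fx _ Fy | c x _ Fx | x y _ Fx _ Fy] //.
- apply: FZ; elim: k k0 => [// | [_ _ | k IH _]]; first by rewrite expr1.
  by rewrite exprS; apply: FM => //; apply: IH.
- exact: FD.
- exact: FZ.
- exact: FM.
Qed.

Lemma chain_F l y x c0 cn : chain phi A0 F0 l y x -> F (c0 * x * cn).
Proof.
move=> ch; have F_x : F x.
  by apply: chain_in_left_ideal ch => [g /F0_F | a g /(F_ideal a) []].
by have [/(F_ideal cn) [_]] := F_ideal c0 F_x.
Qed.

Definition monomial j x := exists a0 am chi l y,
  [/\ Ai j a0, Ai j am, chain phi (Ai j) (Fi j) l y chi & x = a0 * chi * am].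

Lemma Ai_or_monomial_mul j x y :
  Ai j x \/ monomial j x -> Ai j y \/ monomial j y -> Ai j (x * y) \/ monomial j (x * y).
Proof.
have [_ _ _ AM] := Ai_subalg j.
case=> [Ax | [a0 [am [chi [l [z [Aa0 Aam ch ->]]]]]]]
  [Ay | [a0' [am' [chi' [l' [z' [Aa0' Aam' ch' ->]]]]]]]; [left; exact: AM | right ..].
- by exists (x * a0'), am', chi', l', z'; rewrite !mulrA; split=> //; apply: AM.
- by exists a0, (am * y), chi, l, z; rewrite !mulrA; split=> //; apply: AM.
- exists a0, am', (chi * (am * a0') * chi'), (l * phi (am * a0') * l'), (z * z').
  split=> //; last by rewrite !mulrA.
  by apply: chain_cat => //; apply: AM.
Qed.

Lemma gen_AF_span j x : gen_AF (Ai j) (Fi j) x -> span (fun x => Ai j x \/ monomial j x) x.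
Proof.
elim=> [_ [a [f [Aa Ff ->]]] | | x1 x2 _ S1 _ S2 | c x' _ S | x1 x2 _ S1 _ S2].
- apply: spanD; apply: span_base; first by left.
  by right; exists 1, 1, f, 1, f; rewrite mul1r mulr1; split=> //; apply: chain1.
- exact: span0.
- exact: spanD.
- exact: spanZ.
- by apply: span_mul => // y z Sy Sz; apply: span_base; apply: Ai_or_monomial_mul.
Qed.

Lemma span_center_l S j a z : Ai j a ->
  (forall u, unit_or_centered j u -> span S (u * z)) -> span S (a * z).
Proof.
move=> Aa Sz; have [a' a'_cen ->] := centered_decomp Aa.
by rewrite mulrDl -scalerAl; apply: spanD; [|apply: spanZ]; apply: Sz; [right | left].
Qed.

Lemma span_center_r S j a z : Ai j a ->
  (forall u, unit_or_centered j u -> span S (z * u)) -> span S (z * a).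
Proof.
move=> Aa Sz; have [a' a'_cen ->] := centered_decomp Aa.
by rewrite mulrDr -scalerAr; apply: spanD; [|apply: spanZ]; apply: Sz; [right | left].
Qed.

Lemma monomial_span_word j x : monomial j x -> span (word j) x.
Proof.
case=> a0 [am [chi [l [y [Aa0 Aam ch ->]]]]].
rewrite -mulrA; apply: (span_center_l Aa0) => u u_uc; rewrite mulrA.
by apply: (span_center_r Aam) => v v_uc; apply: span_base; exists u, v, chi, l, y.
Qed.

Lemma span_Ai_or_monomial_decomp j x : span (fun x => Ai j x \/ monomial j x) x ->
  exists a w, [/\ Ai j a, span (word j) w & x = a + w].
Proof.
have [Aj0 AD AZ _] := Ai_subalg j.
elim=> [y [Ay | /monomial_span_word Sy] | | x1 x2 _ [a1 [w1 [A1 S1 ->]]] _ [a2 [w2 [A2 S2 ->]]] |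
        c y _ [a [w [Aa Sw ->]]]].
- by exists y, 0; rewrite addr0; split=> //; apply: span0.
- by exists 0, y; rewrite add0r.
- by exists 0, 0; rewrite addr0; split=> //; apply: span0.
- by exists (a1 + a2), (w1 + w2); rewrite addrACA; split; [apply: AD | apply: spanD |].
- by exists (c *: a), (c *: w); rewrite scalerDr; split; [apply: AZ | apply: spanZ |].
Qed.

Lemma span_letter j x : gen_AF (Ai j) (Fi j) x -> phi x = 0 -> span (letter j) x.
Proof.
move=> /gen_AF_span /span_Ai_or_monomial_decomp [a [w [Aa Sw ->]]].
have phiw0 : phi w = 0.
  apply: span_kernel phi_lin _ Sw => _ [a0 [am [chi [l [y [_ _ ch ->]]]]]].
  exact: phi_F (chain_F _ _ (chain_A0F0 ch)).
rewrite (lin_functionalD phi_lin) phiw0 addr0 => phia0.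
apply: spanD; first by apply: span_base; left.
by apply: span_sub Sw => y; right.
Qed.

Lemma word_psiE j x : word j x -> exists a0 am chi l y,
  [/\ x = a0 * chi * am, unit_or_centered j a0 /\ unit_or_centered j am,
      chain phi A0 F0 l y chi, Fi j y & psi x = phi a0 * l * phi am * psi y].
Proof.
case=> a0 [am [chi [l [y [a0_uc am_uc ch ->]]]]].
exists a0, am, chi, l, y; split=> //; first exact: chain_A0F0 ch.
  by case: (Fi_subalg j) => _ _ _ FM; apply: chain_prod_in ch.
by apply: psi_chain (chain_A0F0 ch) (unit_or_centered_A0 a0_uc) (unit_or_centered_A0 am_uc).
Qed.

Section Prefix.
Variables (n : nat) (ix : nat -> I) (b : nat -> B).
Hypothesis ix_alt : alternating n ix.
Hypothesis b_letter : forall k, (k < n)%N -> letter (ix k) (b k).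

Local Notation X m := (\prod_(0 <= k < m) b k).
Local Notation Pi m := (\prod_(0 <= k < m) psi (b k)).

(* In the last two shapes, t is the trailing run of centered letters (possibly
   empty, i.e. 1, or the right end of the last word). *)
Variant prefix_shape (m : nat) : Prop :=
  | PrefixCentered of alt_centered (ix m.-1) (X m) & Pi m = 0
  | PrefixVanishing c0 chi l y t of X m = c0 * chi * t & chain phi A0 F0 l y chi & A0 c0 &
      unit_or_alt_centered (ix m.-1) t & phi c0 * l * phi t = 0 & Pi m = 0
  | PrefixWords c0 chi l t ys of X m = c0 * chi * t &
      chain phi A0 F0 l (\prod_(0 <= k < m) ys k) chi & A0 c0 &
      unit_or_alt_centered (ix m.-1) t & (forall k, (k < m)%N -> Fi (ix k) (ys k)) &
      Pi m = phi c0 * l * phi t * \prod_(0 <= k < m) psi (ys k).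

Lemma prefix_shape1 : (0 < n)%N -> prefix_shape 1.
Proof.
move=> n0; case: (b_letter n0) => [[Ab phib0] | /word_psiE].
  apply: PrefixCentered; rewrite !big_nat1; first exact: alt_centered1.
  by rewrite psi_A0 //; apply: Ai_A0 Ab.
case=> a0 [am [chi [l [y [bE [a0_uc am_uc] ch Fy psibE]]]]].
apply: (@PrefixWords _ a0 chi l am (fun=> y)); rewrite ?big_nat1 //.
- exact: unit_or_centered_A0 a0_uc.
- exact: unit_or_centered_alt.
- by case.
Qed.

Lemma prefix_shapeS_centered m : (0 < m)%N -> (m < n)%N -> centered (ix m) (b m) ->
  prefix_shape m -> prefix_shape m.+1.
Proof.
move=> m0 mn [Ab phib0] shape.
have ij : ix m.-1 <> ix m by move: (@ix_alt m.-1); rewrite prednK //; apply.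
have Pi0 : Pi m.+1 = 0.
  by rewrite big_nat_recr //= psi_A0 ?phib0 ?mulr0 //; apply: Ai_A0 Ab.
have vanish c0 chi l y t : X m = c0 * chi * t -> chain phi A0 F0 l y chi -> A0 c0 ->
    unit_or_alt_centered (ix m.-1) t -> prefix_shape m.+1.
  move=> XE ch A0c0 t_uac; have tb_alt := unit_or_alt_centered_snoc t_uac (conj Ab phib0) ij.
  apply: (@PrefixVanishing _ c0 chi l y (t * b m)) => //.
  - by rewrite big_nat_recr //= XE !mulrA.
  - by right.
  - by rewrite (phi_alt_centered tb_alt) mulr0.
case: shape => [Xalt _ | c0 chi l y t XE ch A0c0 t_uac _ _ | c0 chi l t ys XE ch A0c0 t_uac _ _].
- apply: PrefixCentered Pi0; rewrite big_nat_recr //=.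
  exact: alt_centered_snoc Xalt (conj Ab phib0) ij.
- exact: vanish XE ch A0c0 t_uac.
- exact: vanish XE ch A0c0 t_uac.
Qed.

Lemma prefix_shapeS_word m : (0 < m)%N -> (m < n)%N -> word (ix m) (b m) ->
  prefix_shape m -> prefix_shape m.+1.
Proof.
move=> m0 mn /word_psiE [a0 [am [chi' [l' [y' [bE [a0_uc am_uc] ch' Fy' psibE]]]]]] shape.
have ij : ix m.-1 <> ix m by move: (@ix_alt m.-1); rewrite prednK //; apply.
have XE' c0 chi t : X m = c0 * chi * t -> X m.+1 = c0 * (chi * (t * a0) * chi') * am.
  by move=> XE; rewrite big_nat_recr //= XE bE !mulrA.
have A0ta0 t : unit_or_alt_centered (ix m.-1) t -> A0 (t * a0).
  by move=> /unit_or_alt_centered_A0 A0t; apply: gen_mul A0t (unit_or_centered_A0 a0_uc).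
have am_uac := unit_or_centered_alt am_uc.
case: shape => [Xalt Pi0 | c0 chi l y t XE ch A0c0 t_uac w0 Pi0 |
                c0 chi l t ys XE ch A0c0 t_uac Fys PiE].
- apply: (@PrefixVanishing _ (X m * a0) chi' l' y' am) => //.
  + by rewrite big_nat_recr //= bE !mulrA.
  + exact: A0ta0 (or_intror Xalt).
  + rewrite (phi_mul_unit_or_centered (or_intror Xalt) a0_uc ij).
    by rewrite (phi_alt_centered Xalt) !mul0r.
  + by rewrite big_nat_recr //= Pi0 mul0r.
- apply: (PrefixVanishing (XE' _ _ _ XE) (chain_cat ch (A0ta0 _ t_uac) ch')) => //.
  + by rewrite (phi_mul_unit_or_centered t_uac a0_uc ij) !mulrA w0 !mul0r.
  + by rewrite big_nat_recr //= Pi0 mul0r.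
- have ysE (R : pzRingType) (G : B -> R) :
      \prod_(0 <= k < m.+1) G ([eta ys with m |-> y'] k) = \prod_(0 <= k < m) G (ys k) * G y'.
    by rewrite (big_nat_recr_ext (fun k => G (ys k))) //= ?eqxx // => k km; rewrite ltn_eqF.
  apply: (@PrefixWords _ c0 _ _ am [eta ys with m |-> y'] (XE' _ _ _ XE)) => //.
  + by rewrite (ysE _ id); apply: chain_cat ch (A0ta0 _ t_uac) ch'.
  + move=> k km /=; case: eqP => [-> // | /eqP km']; apply: Fys.
    by rewrite ltn_neqAle km' -ltnS km.
  + rewrite ysE big_nat_recr //= PiE psibE (phi_mul_unit_or_centered t_uac a0_uc ij).
    by ring.
Qed.

Lemma prefix_shape_full : (0 < n)%N -> prefix_shape n.
Proof.
have shape m : (m < n)%N -> prefix_shape m.+1.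
  elim: m => [|m IH] mn; first exact: prefix_shape1.
  have [b_cen | b_word] := b_letter mn.
    by apply: prefix_shapeS_centered => //; apply: IH (ltnW mn).
  by apply: prefix_shapeS_word => //; apply: IH (ltnW mn).
by move=> n0; rewrite -(prednK n0); apply: shape; rewrite prednK.
Qed.

Lemma phi_prod_letters : (0 < n)%N -> phi (X n) = 0.
Proof.
case/prefix_shape_full => [Xalt _ | c0 chi l y t -> ch _ _ _ _ | c0 chi l t ys -> ch _ _ _ _].
- exact: phi_alt_centered Xalt.
- exact: phi_F (chain_F _ _ ch).
- exact: phi_F (chain_F _ _ ch).
Qed.

Lemma psi_prod_letters : boolean_indep Fi psi -> (0 < n)%N -> psi (X n) = Pi n.
Proof.
move=> Fi_bool n0; case: (prefix_shape_full n0) =>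
  [Xalt -> | c0 chi l y t -> ch A0c0 /unit_or_alt_centered_A0 A0t w0 -> |
   c0 chi l t ys -> ch A0c0 /unit_or_alt_centered_A0 A0t Fys ->].
- by rewrite psi_A0 ?(phi_alt_centered Xalt) //; apply: alt_centered_A0 Xalt.
- by rewrite (psi_chain ch A0c0 A0t) w0 mul0r.
- by rewrite (psi_chain ch A0c0 A0t) (Fi_bool n ix ys n0 ix_alt Fys).
Qed.

End Prefix.

Lemma gen_AF_free : Defs.free (fun i => gen_AF (Ai i) (Fi i)) phi.
Proof.
move=> n ix b n0 ix_alt b_cen.
apply: (@multilinear_span _ _ n _ (fun k => letter (ix k)) (multilinear_prod phi_lin)).
  by move=> b' b'_letter; apply: phi_prod_letters ix_alt b'_letter n0.
by move=> k kn; have [] := b_cen k kn; apply: span_letter.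
Qed.

Lemma cond_free_of_boolean :
  boolean_indep Fi psi -> cond_free (fun i => gen_AF (Ai i) (Fi i)) phi psi.
Proof.
move=> Fi_bool; split; first exact: gen_AF_free.
move=> n ix b n0 ix_alt b_cen; apply/eqP; rewrite -subr_eq0; apply/eqP.
apply: (@multilinear_span _ _ n _ (fun k => letter (ix k)) (multilinear_prod_defect psi_lin)).
  by move=> b' b'_letter; rewrite (psi_prod_letters ix_alt b'_letter Fi_bool n0) subrr.
by move=> k kn; have [] := b_cen k kn; apply: span_letter.
Qed.

Lemma boolean_of_cond_free :
  cond_free (fun i => gen_AF (Ai i) (Fi i)) phi psi -> boolean_indep Fi psi.
Proof.
case=> _ cf n ix f n0 ix_alt Ff; apply: (cf n ix) => // k kn; split; last exact/phi_F/Fi_F/Ff.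
apply: gen_base; exists 0, (f k); split; [|exact: Ff|by rewrite add0r].
by case: (Ai_subalg (ix k)).
Qed.

Lemma cond_free_iff_boolean :
  cond_free (fun i => gen_AF (Ai i) (Fi i)) phi psi <-> boolean_indep Fi psi.
Proof. by split; [apply: boolean_of_cond_free | apply: cond_free_of_boolean]. Qed.

End ConditionalFreeness.

Theorem theorem4p3 (R : realType) (B : algType R[i])
    (A F : B -> Prop) (phi Phi : B -> R[i])
    (I : Type) (Ai Fi : I -> B -> Prop) (P : B) :
  is_ncpsB' A F phi Phi ->
  (forall i, [/\ subalg (Ai i), Ai i 1 & forall x, Ai i x -> A x]) ->
  (forall i, subalg (Fi i) /\ forall x, Fi i x -> F x) ->
  F P -> Phi P != 0 ->
  weakly_B'_free Ai
    (fun j : option I => match j with Some i => Fi i | None => F_P P end)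
    phi Phi ->
  (cond_free (fun i => gen_AF (Ai i) (Fi i)) phi (phiP Phi P) <->
   boolean_indep Fi (phiP Phi P)).
Proof.
move=> ncps Ai_hyp Fi_hyp FP PhiP_neq0 weakly_free.
apply: (cond_free_iff_boolean ncps) => // [i | i | i | i x].
- by have [] := Ai_hyp i.
- by have [] := Ai_hyp i.
- by have [] := Fi_hyp i.
- by have [_] := Fi_hyp i; apply.
Qed.
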